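(* Let $\kappa\ge1$, $n\ge1$ be integers and $0<\epsilon<1$. Let $\mathcal{C}=\{q\in\mathbb{R}^{2^\kappa}: q_i\ge0\ \forall i,\ \sum_{i=0}^{2^\kappa-1}q_i=1\}$. If $q\in\mathcal{C}$ is a local minimizer of $q\mapsto\lambda(n,\epsilon,q)$ on $\mathcal{C}$, then $q_0=0$.
   Context: $W=\mathbb{F}_2^\kappa$; $\nu(i)\in W$ is the binary expansion of $i\in\{0,\dots,2^\kappa-1\}$; vectors $q$ are indexed $q_0,\dots,q_{2^\kappa-1}$. For a subspace $S\subseteq W$, $\zeta(S,q)=\sum_{i:\nu(i)\in S}q_i$; $\Xi(W,\kappa-1)$ is the set of $(\kappa-1)$-dimensional subspaces of $W$. For real $q$ define $\lambda(n,\epsilon,q)=(2-\epsilon)^n2^{-\kappa}\Big(1+\sum_{S\in\Xi(W,\kappa-1)}\big(\tfrac{\epsilon}{2-\epsilon}\big)^{n(1-\zeta(S,q))}\Big)-1$ (for $q$ the column-distribution vector of a generator matrix, this is the $\chi^2$ divergence between $p_{MZ}$ and $p_Mp_Z$ for the coset code over a binary erasure channel with erasure probability $\epsilon$). A local minimizer of $f$ on $\mathcal{C}$ is a point $q\in\mathcal{C}$ with $f(q)\le f(q')$ for all $q'\in\mathcal{C}$ in some neighborhood of $q$. *)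

From HB Require Import structures.
From mathcomp Require Import all_boot all_order all_algebra.
From mathcomp Require Import all_classical all_reals all_analysis.
Set Implicit Arguments. Unset Strict Implicit. Unset Printing Implicit Defensive.
Import Order.TTheory GRing.Theory Num.Theory.
Local Open Scope ring_scope.

Notation W kappa := 'rV['F_2]_kappa.

Definition nu (kappa : nat) (i : 'I_(2 ^ kappa)) : W kappa :=
  \row_(j < kappa) (((i %/ 2 ^ j) %% 2)%N)%:R.

(* S (a finite set of vectors) is a (kappa-1)-dimensional subspace of W:
   S coincides with the F_2-linear span of its elements, and that span has
   dimension kappa-1. *)
Definition is_hyperplane (kappa : nat) (S : {set W kappa}) : bool :=
  (S == [set x | x \in (<<enum S>>)%VS]) && (\dim (<<enum S>>)%VS == kappa.-1)%N.

Definition zeta (R : realType) (kappa : nat) (S : {set W kappa})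
  (q : 'I_(2 ^ kappa) -> R) : R :=
  \sum_(i < 2 ^ kappa | nu i \in S) q i.

Definition lambda (R : realType) (kappa n : nat) (eps : R)
  (q : 'I_(2 ^ kappa) -> R) : R :=
  (2 - eps) ^+ n * ((2 ^ kappa)%N%:R)^-1 *
  (1 + \sum_(S : {set W kappa} | is_hyperplane S)
         powR (eps / (2 - eps)) (n%:R * (1 - zeta S q))) - 1.

Definition in_simplex (R : realType) (kappa : nat) (q : 'I_(2 ^ kappa) -> R) : Prop :=
  (forall i, 0 <= q i) /\ \sum_(i < 2 ^ kappa) q i = 1.

(* local minimizer of f on C (neighbourhoods in the sup-norm, equivalent to
   the Euclidean topology on R^(2^kappa)) *)
Definition local_min_on (R : realType) (kappa : nat)
  (C : ('I_(2 ^ kappa) -> R) -> Prop) (f : ('I_(2 ^ kappa) -> R) -> R)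
  (q : 'I_(2 ^ kappa) -> R) : Prop :=
  C q /\ exists delta : R, 0 < delta /\
    forall q', C q' -> (forall i, `|q' i - q i| < delta) -> f q <= f q'.

Lemma pow2_gt0 (kappa : nat) : (0 < 2 ^ kappa)%N.
Proof. by rewrite expn_gt0. Qed.

Definition idx0 (kappa : nat) : 'I_(2 ^ kappa) := Ordinal (pow2_gt0 kappa).

(* Every hyperplane of F_2^kappa contains nu 0 = 0, so moving mass t from q_0 to
   q_1 changes each zeta(S, q) by -t or by 0, and by -t on the hyperplane of
   vectors with vanishing first coordinate, which misses nu 1.  Since
   eps / (2 - eps) < 1, every summand of lambda is nonincreasing in
   zeta(S, q), and strictly decreasing when n >= 1; hence lambda strictly
   decreases. *)

From HB Require Import structures.
From mathcomp Require Import all_boot all_order all_algebra.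
From mathcomp Require Import all_classical all_reals all_analysis.
From mathcomp Require Import lra.
Set Implicit Arguments. Unset Strict Implicit. Unset Printing Implicit Defensive.
Import Order.TTheory GRing.Theory Num.Theory.
Local Open Scope ring_scope.

Lemma gtr_powR (R : realType) (a : R) : 0 < a < 1 -> {homo powR a : x y /~ y < x}.
Proof.
move=> /andP[a_gt0 a_lt1] x y xy.
have lnaK : expR (ln a) = a by apply/eqP; rewrite lnK_eq.
rewrite -lnaK -!expRM ltr_expR ltr_nM2l //.
by apply: ln_lt0; rewrite a_gt0 a_lt1.
Qed.

Section Hyperplanes.
Variable kappa : nat.

Lemma nu_idx0 : nu (idx0 kappa) = 0.
Proof. by apply/rowP => j; rewrite !mxE div0n mod0n. Qed.

Lemma hyperplane_nu_idx0 (S : {set W kappa}) : is_hyperplane S -> nu (idx0 kappa) \in S.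
Proof. by move=> /andP[/eqP -> _]; rewrite nu_idx0 inE mem0v. Qed.

Lemma span_lker (rT : vectType 'F_2) (f : 'Hom(W kappa, rT)) :
  (<<enum [set x | x \in lker f]>> = lker f)%VS.
Proof.
apply/eqP; rewrite eqEsubv; apply/andP; split.
  by apply/span_subvP => x; rewrite mem_enum inE.
by apply/subvP => x fx0; apply: memv_span; rewrite mem_enum inE.
Qed.

Lemma lker_is_hyperplane (f : 'Hom(W kappa, ('F_2)^o)) (v : W kappa) :
  f v != 0 -> is_hyperplane [set x | x \in lker f].
Proof.
move=> fv_neq0; rewrite /is_hyperplane span_lker; apply/andP; split.
  by apply/eqP/setP => x; rewrite !inE.
have dim_img : \dim (limg f) = 1%N.
  apply/eqP; rewrite eqn_leq; apply/andP; split.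
    by have := dimvS (subvf (limg f)); rewrite dimvf.
  rewrite lt0n dimv_eq0; apply: contraNneq fv_neq0 => img0.
  by rewrite -memv0 -img0 memv_img ?memvf.
have := limg_ker_dim f fullv.
rewrite capfv dimvf dim_img /dim /= addn1 mul1n => dim_ker.
by apply/eqP; exact: (congr1 predn dim_ker).
Qed.

End Hyperplanes.

Section FirstCoordinate.
Variable k : nat.

Definition first_coord (v : W k.+1) : ('F_2)^o := v ord0 ord0.

Lemma first_coord_is_linear : linear first_coord.
Proof. by move=> a u v; rewrite /first_coord !mxE. Qed.

HB.instance Definition _ :=
  GRing.isLinear.Build _ _ _ _ first_coord first_coord_is_linear.

Definition first_coord_hyperplane : {set W k.+1} :=
  [set x | x \in lker (linfun first_coord)].

Lemma idx1_subproof : (1 < 2 ^ k.+1)%N.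
Proof. by rewrite -[X in (X < _)%N]/(2 ^ 0)%N ltn_exp2l. Qed.

Definition idx1 : 'I_(2 ^ k.+1) := Ordinal idx1_subproof.

Lemma nu_idx1_notin : nu idx1 \notin first_coord_hyperplane.
Proof. by rewrite inE memv_ker lfunE /= /first_coord mxE. Qed.

Lemma first_coord_hyperplaneP : is_hyperplane first_coord_hyperplane.
Proof.
apply: (@lker_is_hyperplane _ _ (nu idx1)).
by have := nu_idx1_notin; rewrite inE memv_ker.
Qed.

End FirstCoordinate.

Section MoveMass.
Variables (R : realFieldType) (T : finType).

Definition move_mass (q : T -> R) (i j : T) (t : R) : T -> R :=
  fun l => q l - (l == i)%:R * t + (l == j)%:R * t.

Lemma sum_move_mass (P : pred T) q i j t :
  \sum_(l | P l) move_mass q i j t l = \sum_(l | P l) q l - (P i)%:R * t + (P j)%:R * t.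
Proof.
have sum_indicator (a : T) : \sum_(l | P l) (l == a)%:R * t = (P a)%:R * t.
  rewrite big_mkcond (bigD1 a) //= eqxx mul1r big1 ?addr0.
    by case: (P a); rewrite ?mul1r ?mul0r.
  by move=> l /negbTE ->; rewrite mul0r; case: (P l).
by rewrite /move_mass !big_split /= sumrN !sum_indicator.
Qed.

Lemma move_mass_ge0 q i j t : i != j -> (forall l, 0 <= q l) -> 0 <= t <= q i ->
  forall l, 0 <= move_mass q i j t l.
Proof.
move=> ij q_ge0 /andP[t_ge0 t_le] l; rewrite /move_mass.
have [->|li] := eqVneq l i.
  by rewrite (negbTE ij) mul1r mul0r addr0 subr_ge0.
by rewrite mul0r subr0 addr_ge0 // mulr_ge0.
Qed.

Lemma move_mass_dist q i j t l : i != j -> `|move_mass q i j t l - q l| <= `|t|.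
Proof.
move=> ij; rewrite /move_mass addrAC [q l - _]addrC addrK.
have [->|li] := eqVneq l i.
  by rewrite (negbTE ij) mul1r mul0r addr0 normrN.
rewrite mul0r oppr0 add0r.
by case: (l == j); rewrite ?mul1r ?mul0r ?normr0.
Qed.

End MoveMass.

Lemma move_mass_in_simplex (R : realType) kappa (q : 'I_(2 ^ kappa) -> R) i j t :
  i != j -> in_simplex q -> 0 <= t <= q i -> in_simplex (move_mass q i j t).
Proof.
move=> ij [q_ge0 q_sum1] t_range; split; first exact: move_mass_ge0.
by rewrite (sum_move_mass xpredT) q_sum1 /= mul1r addrNK.
Qed.

Lemma zeta_move_mass_idx0 (R : realType) kappa (S : {set W kappa})
    (q : 'I_(2 ^ kappa) -> R) j t :
  is_hyperplane S ->
  zeta S (move_mass q (idx0 kappa) j t) = zeta S q - (nu j \notin S)%:R * t.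
Proof.
move=> hypS; rewrite /zeta sum_move_mass hyperplane_nu_idx0 // mul1r.
by case: (nu j \in S); rewrite /= ?mul1r ?mul0r ?subrK ?subr0 ?addr0.
Qed.

Lemma lambda_lt (R : realType) kappa n (eps : R) (q q' : 'I_(2 ^ kappa) -> R)
    (S0 : {set W kappa}) :
  (1 <= n)%N -> 0 < eps -> eps < 1 ->
  (forall S, is_hyperplane S -> zeta S q' <= zeta S q) ->
  is_hyperplane S0 -> zeta S0 q' < zeta S0 q ->
  lambda n eps q' < lambda n eps q.
Proof.
move=> n_ge1 eps_gt0 eps_lt1 zeta_le hypS0 zeta_lt.
have a_range : 0 < eps / (2 - eps) < 1.
  by rewrite divr_gt0 /= ?ltr_pdivrMr ?mul1r; lra.
have n_gt0 : 0 < n%:R :> R by rewrite ltr0n.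
rewrite /lambda ltrD2r ltr_pM2l; last first.
  by rewrite mulr_gt0 ?invr_gt0 ?ltr0n ?expn_gt0 // exprn_gt0 //; lra.
rewrite ltrD2l (bigD1 S0) // [X in _ < X](bigD1 S0) //=.
apply: ltr_leD.
  by apply: gtr_powR => //; rewrite ltr_pM2l // ltrD2l ltrN2.
apply: ler_sum => S /andP[hypS _].
apply: ger_powR; first by case/andP: a_range => -> /ltW ->.
by rewrite ler_pM2l // lerD2l lerN2 zeta_le.
Qed.

Theorem theorem6 (R : realType) (kappa n : nat) (eps : R) :
  (1 <= kappa)%N -> (1 <= n)%N -> 0 < eps -> eps < 1 ->
  forall q : 'I_(2 ^ kappa) -> R,
    local_min_on (@in_simplex R kappa) (lambda n eps) q ->
    q (idx0 kappa) = 0.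
Proof.
case: kappa => [//|k] _ n_ge1 eps_gt0 eps_lt1 q [q_simplex [delta [delta_gt0 q_min]]].
have [q0_ge0 _] := q_simplex; have := q0_ge0 (idx0 k.+1).
rewrite le0r => /orP[/eqP //|q0_gt0]; exfalso.
pose t := Num.min (q (idx0 k.+1)) (delta / 2).
have t_gt0 : 0 < t by rewrite lt_min q0_gt0 divr_gt0.
have t_lt_delta : t < delta by rewrite gt_min orbC ltr_pdivrMr // ltr_pMr // ltr1n.
have idx01 : idx0 k.+1 != idx1 k by [].
pose q' := move_mass q (idx0 k.+1) (idx1 k) t.
have q'_simplex : in_simplex q'.
  by apply: move_mass_in_simplex; rewrite // ltW //= ge_min lexx.
have q'_close i : `|q' i - q i| < delta.
  by apply: le_lt_trans (move_mass_dist _ _ _ idx01) _; rewrite gtr0_norm.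
apply/negP: (q_min q' q'_simplex q'_close); rewrite -ltNge.
apply: (lambda_lt (S0 := first_coord_hyperplane k)) => //.
- by move=> S hypS; rewrite zeta_move_mass_idx0 // gerBl mulr_ge0 // ltW.
- exact: first_coord_hyperplaneP.
- by rewrite zeta_move_mass_idx0 ?first_coord_hyperplaneP // nu_idx1_notin mul1r gtrBl.
Qed.
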